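(* Let $\mathbb{T}$ be a time scale, $\alpha\in]0,1]$, and let $f,g:\mathbb{T}\to\mathbb{R}$ be nabla fractional differentiable of order $\alpha$ at $t\in\mathbb{T}_\kappa$. Then: (i) $f+g$ is nabla fractional differentiable of order $\alpha$ at $t$ with $(f+g)^{\nabla^\alpha}(t)=f^{\nabla^\alpha}(t)+g^{\nabla^\alpha}(t)$; (ii) for every $\lambda\in\mathbb{R}$, $\lambda f$ is nabla fractional differentiable of order $\alpha$ at $t$ with $(\lambda f)^{\nabla^\alpha}(t)=\lambda f^{\nabla^\alpha}(t)$; (iii) if $f$ and $g$ are continuous, then $fg$ is nabla fractional differentiable of order $\alpha$ at $t$ with $$(fg)^{\nabla^\alpha}(t)=f^{\nabla^\alpha}(t)g(t)+f^\rho(t)g^{\nabla^\alpha}(t)=f^{\nabla^\alpha}(t)g^\rho(t)+f(t)g^{\nabla^\alpha}(t);$$ (iv) if $f$ is continuous and $f^\rho(t)f(t)\neq0$, then $1/f$ is nabla fractional differentiable of order $\alpha$ at $t$ with $\left(\frac1f\right)^{\nabla^\alpha}(t)=-\frac{f^{\nabla^\alpha}(t)}{f^\rho(t)f(t)}$; (v) if $f$ and $g$ are continuous and $g^\rho(t)g(t)\neq0$, then $f/g$ is nabla fractional differentiable of order $\alpha$ at $t$ with $$\left(\frac fg\right)^{\nabla^\alpha}(t)=\frac{f^{\nabla^\alpha}(t)g(t)-f(t)g^{\nabla^\alpha}(t)}{g^\rho(t)g(t)}.$$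
   Context: A time scale $\mathbb{T}$ is a nonempty closed subset of $\mathbb{R}$ with the induced topology. $\rho(t)=\sup\{s\in\mathbb{T}: s<t\}$ (with $\sup\emptyset=\inf\mathbb{T}$), $\sigma(t)=\inf\{s\in\mathbb{T}:s>t\}$ (with $\inf\emptyset=\sup\mathbb{T}$), $f^\rho=f\circ\rho$. $\mathbb{T}_\kappa=\mathbb{T}\setminus\{\inf\mathbb{T}\}$ if $\inf\mathbb{T}$ is finite with $\sigma(\inf\mathbb{T})>\inf\mathbb{T}$, otherwise $\mathbb{T}_\kappa=\mathbb{T}$. Let $A=\,]0,1]\cap\{1/q: q\text{ odd positive integer}\}$; for $\alpha=1/q\in A$, $x^\alpha$ is the real $q$-th root. For $t\in\mathbb{T}_\kappa$, $f^{\nabla^\alpha}(t)$ is the real number (if it exists) such that for every $\varepsilon>0$ there is $\delta>0$ with $\big|[f(s)-f^\rho(t)]-f^{\nabla^\alpha}(t)[s-\rho(t)]^\alpha\big|\le\varepsilon|s-\rho(t)|^\alpha$ for all $s\in\,]t-\delta,t+\delta[\,\cap\mathbb{T}$ if $\alpha\in A$, resp. all $s\in[t,t+\delta[\,\cap\mathbb{T}$ if $\alpha\notin A$; if it exists, $f$ is nabla fractional differentiable of order $\alpha$ at $t$. *)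

From HB Require Import structures.
From mathcomp Require Import all_boot all_order all_algebra.
From mathcomp Require Import all_classical all_reals all_analysis.
Set Implicit Arguments. Unset Strict Implicit. Unset Printing Implicit Defensive.
Import Order.TTheory GRing.Theory Num.Theory.
Import numFieldNormedType.Exports.
Local Open Scope classical_set_scope.
Local Open Scope ring_scope.

Section TimeScale.
Variable R : realType.

Definition time_scale (T : set R) : Prop := T !=set0 /\ closed T.

Definition inf_finite (T : set R) : Prop := has_lbound T.

Definition rho (T : set R) (t : R) : R :=
  let E := [set s | T s /\ s < t] in
  if E == set0 then inf T else sup E.

Definition sigma (T : set R) (t : R) : R :=
  let E := [set s | T s /\ t < s] in
  if E == set0 then sup T else inf E.

Definition T_kappa (T : set R) : set R :=
  if `[< inf_finite T /\ inf T < sigma T (inf T) >]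
  then T `\ inf T else T.

Definition in_A (alpha : R) : Prop :=
  exists q : nat, odd q /\ alpha = (q%:R)^-1.

(* x^alpha: real q-th root (odd) for alpha = 1/q in A; otherwise the usual
   power (only used on nonnegative arguments for alpha outside A). *)
Definition fpow (alpha x : R) : R :=
  if `[< in_A alpha >] && (x < 0) then - (`|x| `^ alpha) else `|x| `^ alpha.

Definition is_nabla_frac_deriv (T : set R) (alpha : R) (f : R -> R) (t D : R)
  : Prop :=
  forall eps : R, 0 < eps -> exists2 delta : R, 0 < delta &
    forall s : R, T s ->
      (if `[< in_A alpha >] then `|s - t| < delta else t <= s < t + delta) ->
      `| (f s - f (rho T t)) - D * fpow alpha (s - rho T t) |
        <= eps * `|s - rho T t| `^ alpha.

Definition nabla_frac_differentiable (T : set R) (alpha : R) (f : R -> R)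
  (t : R) : Prop := exists D, is_nabla_frac_deriv T alpha f t D.

End TimeScale.

(* Each rule is an instance of the calculus of first-order expansions
   f s = f r + D * w s + o(m s) along a filter, where |w| <= m: o(m) terms are
   stable under sums and under multiplication by convergent factors, and w
   times a vanishing factor is o(m).  The nabla derivative is such an expansion
   with r = rho t, w s = (s - r)^alpha and m = |w|, along the window around t
   (two-sided for alpha in A, right-sided otherwise).  Continuity makes the
   other factor converge to its value at t, which is why t and rho t both occur
   in the product rule. *)

From mathcomp Require Import all_boot all_order all_algebra.
From mathcomp Require Import all_classical all_reals all_analysis.
From mathcomp Require Import ring.
Set Implicit Arguments.
Unset Strict Implicit.
Unset Printing Implicit Defensive.

Import Order.TTheory GRing.Theory Num.Theory.
Import numFieldNormedType.Exports.
Local Open Scope classical_set_scope.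
Local Open Scope ring_scope.

Section Negligible.
Context {R : realFieldType} {U : Type} (F : set_system U) {FF : Filter F}.
Variable m : U -> R.

Definition negligible (e : U -> R) :=
  forall eps, 0 < eps -> \forall s \near F, `|e s| <= eps * m s.

Lemma negligible_eq_near (e1 e2 : U -> R) :
  (\forall s \near F, e1 s = e2 s) -> negligible e1 -> negligible e2.
Proof.
move=> e12 e1o eps eps0; near=> s.
by rewrite -(near e12 s) //; near: s; exact: e1o.
Unshelve. all: by end_near.
Qed.

Lemma negligibleD (e1 e2 : U -> R) :
  negligible e1 -> negligible e2 -> negligible (fun s => e1 s + e2 s).
Proof.
move=> e1o e2o eps eps0; have eps20 : 0 < eps / 2 by rewrite divr_gt0.
near=> s; apply: le_trans (ler_normD _ _) _.
rewrite [leRHS](_ : _ = eps / 2 * m s + eps / 2 * m s); last by field.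
by apply: lerD; near: s; [exact: e1o | exact: e2o].
Unshelve. all: by end_near.
Qed.

Lemma negligibleMl (h e : U -> R) (l : R) :
  h @ F --> l -> negligible e -> negligible (fun s => h s * e s).
Proof.
move=> hl eo eps eps0.
have K0 : 0 < `|l| + 1 by rewrite ltr_pwDr // ?normr_ge0.
have epsK0 : 0 < eps / (`|l| + 1) by rewrite divr_gt0.
have hb : \forall s \near F, `|h s| <= `|l| + 1.
  apply: filterS ((cvgrPdist_le _ _).1 hl 1 ltr01) => s hd.
  rewrite -[h s](subrK l) addrC; apply: le_trans (ler_normD _ _) _.
  by rewrite lerD2l distrC.
near=> s; rewrite normrM.
apply: le_trans (ler_pM (normr_ge0 _) (normr_ge0 _) (near hb s _)
  (near (eo _ epsK0) s _)) _ => //.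
by rewrite [leLHS](_ : _ = eps * m s) //; field; rewrite gt_eqF.
Unshelve. all: by end_near.
Qed.

Lemma negligibleM_cvg0 (w v : U -> R) :
  (forall s, `|w s| <= m s) -> v @ F --> 0 -> negligible (fun s => w s * v s).
Proof.
move=> wm v0 eps eps0; near=> s; rewrite normrM mulrC.
apply: ler_pM; rewrite ?normr_ge0 //.
by near: s; exact: (cvgr0Pnorm_le _).1 v0 eps eps0.
Unshelve. all: by end_near.
Qed.

End Negligible.

Section Expansion.
Context {R : realFieldType} {U : Type} (F : set_system U) {FF : Filter F}.
Variables (w m : U -> R) (r t : U).
Hypothesis w_le_m : forall s, `|w s| <= m s.
Implicit Types (f g : U -> R) (Df Dg : R).

Definition expansion (f : U -> R) (D : R) :=
  negligible F m (fun s => f s - f r - D * w s).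

Lemma expansionD f g Df Dg : expansion f Df -> expansion g Dg ->
  expansion (fun s => f s + g s) (Df + Dg).
Proof.
move=> fe ge; apply: negligible_eq_near (negligibleD fe ge).
by apply: nearW => s; ring.
Qed.

Lemma expansionZ f Df (c : R) : expansion f Df ->
  expansion (fun s => c * f s) (c * Df).
Proof.
move=> fe; apply: negligible_eq_near (negligibleMl (@cvg_cst _ c _ F _) fe).
by apply: nearW => s; ring.
Qed.

Lemma expansionM f g Df Dg : g @ F --> g t ->
  expansion f Df -> expansion g Dg ->
  expansion (fun s => f s * g s) (Df * g t + f r * Dg).
Proof.
move=> gt fe ge.
have g0 : (fun s => g s - g t) @ F --> 0 by apply/subr_cvg0.
apply: negligible_eq_near (negligibleD (negligibleD (negligibleMl gt fe)
  (negligibleMl (@cvg_cst _ Df _ F _) (negligibleM_cvg0 w_le_m g0)))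
  (negligibleMl (@cvg_cst _ (f r) _ F _) ge)).
by apply: nearW => s; ring.
Qed.

Lemma expansionV f Df : f @ F --> f t -> f r != 0 -> f t != 0 ->
  expansion f Df -> expansion (fun s => (f s)^-1) (- (Df / (f r * f t))).
Proof.
move=> ft fr0 ft0 fe.
have f0 : (fun s => f s - f t) @ F --> 0 by apply/subr_cvg0.
have fV : (fun s => (f s)^-1) @ F --> (f t)^-1 by apply: cvgV.
have fVc c : (fun s => (f s)^-1 * c) @ F --> (f t)^-1 * c.
  exact: cvgM fV (@cvg_cst _ c _ F _).
apply: negligible_eq_near (negligibleD (negligibleMl (fVc (- (f r)^-1)) fe)
  (negligibleMl (fVc (Df / (f t * f r))) (negligibleM_cvg0 w_le_m f0))).
near=> s.
have fs0 : f s != 0 by near: s; exact: cvgr_neq0 ft ft0.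
by field; rewrite fs0 fr0 ft0.
Unshelve. all: by end_near.
Qed.

Lemma expansionMr f g Df Dg : f @ F --> f t ->
  expansion f Df -> expansion g Dg ->
  expansion (fun s => f s * g s) (Df * g r + f t * Dg).
Proof.
move=> ft fe ge; have := expansionM ft ge fe.
have -> : (fun s => g s * f s) = (fun s => f s * g s).
  by apply/funext => s; rewrite mulrC.
by rewrite [X in expansion _ X -> _]addrC !(mulrC (f _)) (mulrC (g _)).
Qed.

Lemma expansion_div f g Df Dg : f @ F --> f t -> g @ F --> g t ->
  g r != 0 -> g t != 0 -> expansion f Df -> expansion g Dg ->
  expansion (fun s => f s / g s) ((Df * g t - f t * Dg) / (g r * g t)).
Proof.
move=> ft gt gr0 gt0 fe ge; have := expansionMr ft fe (expansionV gt gr0 gt0 ge).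
suff -> : Df * (g r)^-1 + f t * - (Dg / (g r * g t)) =
  (Df * g t - f t * Dg) / (g r * g t) by [].
by field; rewrite gr0 gt0.
Qed.

End Expansion.

Section Nabla.
Variable R : realType.
Implicit Types (T : set R) (alpha t : R) (f : R -> R).

Lemma T_kappa_sub T : T_kappa T `<=` T.
Proof. by rewrite /T_kappa; case: ifP => _; [exact: subDsetl | ]. Qed.

Lemma normr_fpow alpha x : `|fpow alpha x| = `|x| `^ alpha.
Proof. by rewrite /fpow; case: ifP => _; rewrite ?normrN ger0_norm // powR_ge0. Qed.

Definition nabla_nbhs T alpha t : set_system R :=
  within [set s | T s /\ (in_A alpha \/ t <= s)] (nbhs t).

#[global] Instance nabla_nbhs_filter T alpha t : Filter (nabla_nbhs T alpha t).
Proof. exact: within_filter. Qed.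

Lemma nabla_windowE alpha t d s :
  (if `[< in_A alpha >] then `|s - t| < d else t <= s < t + d) <->
  `|s - t| < d /\ (in_A alpha \/ t <= s).
Proof.
case: asboolP => hA; first by split=> [|[]]; auto.
have distE : t <= s -> (`|s - t| < d) = (s < t + d).
  by move=> ts; rewrite ger0_norm ?subr_ge0 // ltrBlDl.
split=> [/andP[ts st] | [st [//|ts]]]; first by rewrite distE; auto.
by rewrite ts -distE.
Qed.

Lemma is_nabla_frac_derivE T alpha f t D :
  is_nabla_frac_deriv T alpha f t D <->
  expansion (nabla_nbhs T alpha t) (fun s => fpow alpha (s - rho T t))
    (fun s => `|s - rho T t| `^ alpha) (rho T t) f D.
Proof.
split=> fD eps /fD.
- move=> [d d0 fd]; rewrite near_withinE; apply/nbhs_ballP; exists d => //= s.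
  rewrite -ball_normE /= distrC => ts [Ts hA].
  by apply: fd => //; apply/nabla_windowE.
- rewrite near_withinE => /nbhs_ballP[d d0 fd]; exists d => // s Ts.
  move=> /nabla_windowE[ts hA]; apply: fd => //.
  by rewrite -ball_normE /= distrC.
Qed.

Lemma cvg_nabla_nbhs T alpha f t : {within T, continuous f} -> T t ->
  f @ nabla_nbhs T alpha t --> f t.
Proof.
move=> /subspace_continuousP fc Tt; apply: cvg_trans (fc t Tt).
by apply: cvg_app; apply: within_subset => s [].
Qed.

End Nabla.

Theorem theorem3p10 (R : realType) (T : set R) (alpha : R) (f g : R -> R)
  (t Df Dg : R) :
  time_scale T -> 0 < alpha <= 1 -> T_kappa T t ->
  is_nabla_frac_deriv T alpha f t Df -> is_nabla_frac_deriv T alpha g t Dg ->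
  [/\ (* (i) *)
      is_nabla_frac_deriv T alpha (fun x => f x + g x) t (Df + Dg),
      (* (ii) *)
      (forall lambda : R,
         is_nabla_frac_deriv T alpha (fun x => lambda * f x) t (lambda * Df)),
      (* (iii) *)
      ({within T, continuous f} -> {within T, continuous g} ->
         is_nabla_frac_deriv T alpha (fun x => f x * g x) t
           (Df * g t + f (rho T t) * Dg)
         /\ is_nabla_frac_deriv T alpha (fun x => f x * g x) t
           (Df * g (rho T t) + f t * Dg)),
      (* (iv) *)
      ({within T, continuous f} -> f (rho T t) * f t != 0 ->
         is_nabla_frac_deriv T alpha (fun x => (f x)^-1) t
           (- (Df / (f (rho T t) * f t))))
    & (* (v) *)
      ({within T, continuous f} -> {within T, continuous g} ->
         g (rho T t) * g t != 0 ->
         is_nabla_frac_deriv T alpha (fun x => f x / g x) t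
           ((Df * g t - f t * Dg) / (g (rho T t) * g t)))].
Proof.
move=> _ _ /T_kappa_sub Tt /is_nabla_frac_derivE fD /is_nabla_frac_derivE gD.
have w_le_m s : `|fpow alpha (s - rho T t)| <= `|s - rho T t| `^ alpha.
  by rewrite normr_fpow.
have cvg_t (h : R -> R) :
    {within T, continuous h} -> h @ nabla_nbhs T alpha t --> h t.
  by move=> hc; exact: cvg_nabla_nbhs hc Tt.
split=> [||fc gc|fc|fc gc]; rewrite ?is_nabla_frac_derivE.
- exact: expansionD.
- by move=> c; apply/is_nabla_frac_derivE; exact: expansionZ.
- split; [exact (expansionM w_le_m (cvg_t _ gc) fD gD)
         | exact (expansionMr w_le_m (cvg_t _ fc) fD gD)].
- rewrite mulf_eq0 negb_or => /andP[fr0 ft0].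
  exact (expansionV w_le_m (cvg_t _ fc) fr0 ft0 fD).
- rewrite mulf_eq0 negb_or => /andP[gr0 gt0].
  exact (expansion_div w_le_m (cvg_t _ fc) (cvg_t _ gc) gr0 gt0 fD gD).
Qed.
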